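(* If $\mathcal{O}$ contains only Scott-open modalities, then for $R\subseteq X\times Y$: (1) if $R$ is reflexive (so $X=Y$), then for all $t,r\in TX$, $t\le r$ implies $t\,\mathcal{O}(R)\,r$; (2) for any ascending sequences $u_0\le u_1\le\dots$ in $TX$ and $v_0\le v_1\le\dots$ in $TY$, if $u_n\,\mathcal{O}(R)\,v_n$ for all $n$, then $(\bigsqcup_n u_n)\,\mathcal{O}(R)\,(\bigsqcup_n v_n)$.
   Context: $\Sigma$ is a signature of effect operations with arities $\alpha^n\to\alpha$, $\mathbf{N}\times\alpha^n\to\alpha$, $\alpha^{\mathbf{N}}\to\alpha$ or $\mathbf{N}\times\alpha^{\mathbf{N}}\to\alpha$. $TX$ is the set of possibly infinite labelled trees with leaves $\bot$ or elements of $X$ and internal nodes labelled by operations (or $\sigma_m$, $m\in\mathbb{N}$) with children according to arity; $t\le t'$ iff $t$ is obtained from $t'$ by replacing (possibly infinitely many) subtrees with $\bot$-leaves; this is an $\omega$-complete partial order with suprema $\bigsqcup$. $\mathbf{1}=\{*\}$. A set $\mathcal{O}$ of modalities is given with $[\![o]\!]\subseteq T\mathbf{1}$; $o$ is Scott-open if $[\![o]\!]$ is upward closed under $\le$ and whenever $t_1\le t_2\le\dots$ has $\bigsqcup_i t_i\in[\![o]\!]$, some $t_n\in[\![o]\!]$. $t[\in P]\in T\mathbf{1}$ replaces leaves in $P$ by $*$ and other $X$-leaves by $\bot$; $o(A)=\{t\in TX\mid t[\in A]\in[\![o]\!]\}$. $R[A]=\{y\mid\exists x\in A,\ xRy\}$;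 $\mathcal{O}$-relator: $t\,\mathcal{O}(R)\,t'$ iff $\forall A\subseteq X\ \forall o\in\mathcal{O}$, $t\in o(A)\Rightarrow t'\in o(R[A])$. *)

(* Possibly infinite labelled trees TX over a signature,
   represented as partial labelling functions on addresses (lists of child
   indices). *)
From Stdlib Require Import List Arith ClassicalEpsilon.
Import ListNotations.
Set Implicit Arguments.

Section Trees.
(* Node labels L (operations, possibly together with their N-parameter, and
   the sigma_m nodes); [ar l = Some n] : n children (indices 0..n-1),
   [ar l = None] : countably many children (indices in N). *)
Variable L : Type.
Variable ar : L -> option nat.

Inductive label (X : Type) : Type :=
| LBot : label X
| LLeaf : X -> label X
| LNode : L -> label X.
Arguments LBot {X}.

Definition child_ok (l : L) (i : nat) : Prop :=
  match ar l with Some n => i < n | None => True end.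

Definition wf_tree (X : Type) (t : list nat -> option (label X)) : Prop :=
  t [] <> None /\
  forall p i, t (p ++ [i]) <> None <->
              exists l, t p = Some (LNode X l) /\ child_ok l i.

Record tree (X : Type) := mkTree {
  tfun :> list nat -> option (label X);
  twf : wf_tree tfun }.

(* t <= t' : t is obtained from t' by replacing subtrees with bottom leaves *)
Definition tle (X : Type) (t t' : tree X) : Prop :=
  forall p, t p = None \/ t p = t' p \/ (t p = Some LBot /\ t' p <> None).

Definition ascending (X : Type) (u : nat -> tree X) : Prop :=
  forall n, tle (u n) (u (S n)).

Definition is_sup (X : Type) (u : nat -> tree X) (s : tree X) : Prop :=
  (forall n, tle (u n) s) /\
  (forall b, (forall n, tle (u n) b) -> tle s b).

Definition scott_open (O : tree unit -> Prop) : Prop :=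
  (forall t t', tle t t' -> O t -> O t') /\
  (forall (u : nat -> tree unit) s, ascending u -> is_sup u s -> O s ->
     exists n, O (u n)).

Definition restrict_fun (X : Type) (P : X -> Prop)
  (t : list nat -> option (label X)) : list nat -> option (label unit) :=
  fun p => match t p with
           | None => None
           | Some LBot => Some LBot
           | Some (LLeaf x) =>
               if excluded_middle_informative (P x)
               then Some (LLeaf tt) else Some LBot
           | Some (LNode _ l) => Some (LNode unit l)
           end.

Lemma restrict_wf (X : Type) (P : X -> Prop) (t : tree X) :
  wf_tree (restrict_fun P t).
Proof.
  destruct t as [t [Hr Hc]]; unfold restrict_fun; simpl; split.
  - destruct (t []) as [[| x |]|]; [discriminate|
      destruct (excluded_middle_informative (P x)); discriminate|
      discriminate| contradiction].
  - intros p i; specialize (Hc p i); split.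
    + intro H.
      assert (H' : t (p ++ [i]) <> None)
        by (destruct (t (p ++ [i])); [discriminate|exfalso; apply H; reflexivity]).
      apply Hc in H'; destruct H' as [l [E C]]; exists l; rewrite E; auto.
    + intros [l [E C]].
      assert (E' : t p = Some (LNode X l)).
      { destruct (t p) as [[| x |]|]; try discriminate.
        - destruct (excluded_middle_informative (P x)); discriminate.
        - injection E as ->; reflexivity. }
      assert (H' : t (p ++ [i]) <> None) by (apply Hc; eauto).
      destruct (t (p ++ [i])) as [[| x |]|]; try discriminate.
      * destruct (excluded_middle_informative (P x)); discriminate.
      * contradiction.
Qed.

Definition restrict (X : Type) (P : X -> Prop) (t : tree X) : tree unit :=
  mkTree (restrict_wf P t).

Definition modal (X : Type) (O : tree unit -> Prop) (A : X -> Prop) (t : tree X)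
  : Prop := O (restrict A t).

Definition rimage (X Y : Type) (R : X -> Y -> Prop) (A : X -> Prop) : Y -> Prop :=
  fun y => exists x, A x /\ R x y.

(* the O-relator; the set of modalities is a type Mod with [[.]] = sem *)
Definition Orel (Mod : Type) (sem : Mod -> tree unit -> Prop)
  (X Y : Type) (R : X -> Y -> Prop) (t : tree X) (t' : tree Y) : Prop :=
  forall (A : X -> Prop) (o : Mod),
    modal (sem o) A t -> modal (sem o) (rimage R A) t'.

End Trees.

(* Restriction t |-> t[in A] is monotone in both t and A; with upward closure
   of the modalities this gives (1), and also the last step of (2).
   Restriction moreover preserves suprema of ascending chains, since every
   address of the supremum already carries its final label at some stage of
   the chain.  So if sup u lies in o(A), Scott-openness puts some u_n in o(A),
   the hypothesis gives v_n in o(R[A]), and upward closure lifts this to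
   sup v. *)
From Stdlib Require Import List Arith ClassicalEpsilon.
Import ListNotations.
Set Implicit Arguments.

Section Restriction.
Variables (L : Type) (ar : L -> option nat) (X : Type).

Lemma restrict_tle (A B : X -> Prop) (t r : tree ar X) :
  (forall x, A x -> B x) -> tle t r -> tle (restrict A t) (restrict B r).
Proof.
  intros HAB Htr p; simpl; unfold restrict_fun.
  destruct (Htr p) as [Ht | [Ht | [Ht Hr]]]; rewrite Ht.
  - now left.
  - destruct (tfun r p) as [[| x | l] |]; auto.
    destruct (excluded_middle_informative (A x)) as [a | a];
      destruct (excluded_middle_informative (B x)) as [b | b];
      auto; [exfalso; auto | right; right; split; [reflexivity | discriminate]].
  - right; right; split; [reflexivity |].
    destruct (tfun r p) as [[| x | l] |]; try discriminate; [| contradiction].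
    destruct (excluded_middle_informative (B x)); discriminate.
Qed.

Lemma restrict_agree (A : X -> Prop) {t r : tree ar X} {p} :
  t p = r p -> restrict A t p = restrict A r p.
Proof. intro E; simpl; unfold restrict_fun; now rewrite E. Qed.

End Restriction.

Section ChainSupremum.
Variables (L : Type) (ar : L -> option nat) (X : Type).
Variable u : nat -> tree ar X.
Hypothesis u_asc : ascending u.

Lemma chain_label_stable {p m l} :
  u m p = Some l -> l <> LBot L X -> forall k, m <= k -> u k p = Some l.
Proof.
  intros Hm Hl k Hk; induction Hk as [| k _ IH]; auto.
  destruct (u_asc k p) as [E | [E | [E _]]]; congruence.
Qed.

(* [is_sup] only characterises the supremum abstractly; to read off its
   labels we build the pointwise supremum and compare. *)
Definition chain_sup_fun (p : list nat) : option (label L X) :=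
  match excluded_middle_informative
          (exists n l, u n p = Some l /\ l <> LBot L X) with
  | left H => u (proj1_sig (constructive_indefinite_description _ H)) p
  | right _ =>
      if excluded_middle_informative (exists n, u n p = Some (LBot L X))
      then Some (LBot L X) else None
  end.

Lemma chain_sup_fun_nonbot {p n l} :
  u n p = Some l -> l <> LBot L X -> chain_sup_fun p = Some l.
Proof.
  intros En Hl; unfold chain_sup_fun.
  destruct (excluded_middle_informative _) as [H | H]; [| exfalso; eauto].
  destruct (constructive_indefinite_description _ H) as [m [l' [Em Hl']]]; simpl.
  rewrite Em.
  rewrite <- (chain_label_stable Em Hl' (Nat.le_max_r n m)).
  exact (chain_label_stable En Hl (Nat.le_max_l n m)).
Qed.

Lemma chain_sup_fun_witness {p l} :
  chain_sup_fun p = Some l -> exists n, u n p = Some l.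
Proof.
  unfold chain_sup_fun; destruct (excluded_middle_informative _) as [H | _].
  - eauto.
  - destruct (excluded_middle_informative _) as [[n En] | _]; [| discriminate].
    intro E; injection E as <-; eauto.
Qed.

Lemma chain_sup_fun_defined {p n} : u n p <> None -> chain_sup_fun p <> None.
Proof.
  intro Hn; destruct (u n p) as [l |] eqn:En; [| contradiction].
  destruct l as [| x | l].
  - unfold chain_sup_fun; destruct (excluded_middle_informative _) as [H | H].
    + destruct (constructive_indefinite_description _ H) as [m [l' [Em Hl']]].
      simpl; congruence.
    + destruct (excluded_middle_informative _) as [_ | H']; [discriminate |].
      exfalso; eauto.
  - now rewrite (chain_sup_fun_nonbot En).
  - now rewrite (chain_sup_fun_nonbot En).
Qed.

Lemma chain_sup_wf : wf_tree ar chain_sup_fun.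
Proof.
  split.
  - apply (@chain_sup_fun_defined [] 0), twf.
  - intros p i; split.
    + intro Hpi; destruct (chain_sup_fun (p ++ [i])) as [l |] eqn:E;
        [| contradiction].
      destruct (chain_sup_fun_witness E) as [n En].
      destruct (proj1 (proj2 (twf (u n)) p i)) as [l' [Ep Hi]]; [congruence |].
      exists l'; split; [| exact Hi].
      now apply (chain_sup_fun_nonbot Ep).
    + intros [l [Ep Hi]]; destruct (chain_sup_fun_witness Ep) as [n En].
      apply (@chain_sup_fun_defined _ n), (proj2 (twf (u n))); eauto.
Qed.

Definition chain_sup : tree ar X := mkTree chain_sup_wf.

Lemma chain_sup_ub n : tle (u n) chain_sup.
Proof.
  intro p; simpl.
  destruct (u n p) as [[| x | l] |] eqn:En; auto.
  - right; right; split; [reflexivity |].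
    apply (@chain_sup_fun_defined _ n); congruence.
  - right; left; symmetry; now apply (chain_sup_fun_nonbot En).
  - right; left; symmetry; now apply (chain_sup_fun_nonbot En).
Qed.

Lemma is_sup_label_attained (su : tree ar X) :
  is_sup u su -> forall p, su p = None \/ exists n, u n p = su p.
Proof.
  intros [Hub Hleast] p.
  destruct (Hleast chain_sup chain_sup_ub p) as [E | [E | [E Hs]]]; simpl in *.
  - now left.
  - destruct (chain_sup_fun p) as [l |] eqn:Es; [right | now left].
    destruct (chain_sup_fun_witness Es) as [n En]; exists n; congruence.
  - right; destruct (chain_sup_fun p) as [l |] eqn:Es; [| contradiction].
    destruct (chain_sup_fun_witness Es) as [n En]; exists n.
    destruct l as [| x | l]; [congruence | |];
      destruct (Hub n p) as [K | [K | [K _]]]; congruence.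
Qed.

Lemma restrict_is_sup (A : X -> Prop) (su : tree ar X) :
  is_sup u su ->
  ascending (fun n => restrict A (u n)) /\
  is_sup (fun n => restrict A (u n)) (restrict A su).
Proof.
  intros Hsu; split; [| split].
  - intro n; now apply restrict_tle.
  - intro n; apply restrict_tle; [auto | apply (proj1 Hsu)].
  - intros b Hb p.
    destruct (is_sup_label_attained Hsu p) as [E | [n E]].
    + left; simpl; unfold restrict_fun; now rewrite E.
    + rewrite <- (restrict_agree A E); apply Hb.
Qed.

End ChainSupremum.

Section Modalities.
Variables (L : Type) (ar : L -> option nat) (X : Type).

Lemma modal_tle {O : tree ar unit -> Prop} {A B : X -> Prop} {t r : tree ar X} :
  (forall s s', tle s s' -> O s -> O s') ->
  (forall x, A x -> B x) -> tle t r -> modal O A t -> modal O B r.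
Proof. intros HO HAB Htr; apply HO, restrict_tle; assumption. Qed.

Lemma modal_sup {O : tree ar unit -> Prop} {A : X -> Prop}
  {u : nat -> tree ar X} {su : tree ar X} :
  scott_open O -> ascending u -> is_sup u su ->
  modal O A su -> exists n, modal O A (u n).
Proof.
  intros [_ HO] Hu Hsu; destruct (restrict_is_sup Hu A Hsu) as [Hasc Hsup].
  exact (HO _ _ Hasc Hsup).
Qed.

End Modalities.

Unset Implicit Arguments.

Theorem lemma5p9 (L : Type) (ar : L -> option nat)
  (Mod : Type) (sem : Mod -> tree ar unit -> Prop)
  (Hopen : forall o : Mod, scott_open (sem o)) :
  (forall (X : Type) (R : X -> X -> Prop),
     (forall x, R x x) ->
     forall t r : tree ar X, tle t r -> Orel sem R t r) /\
  (forall (X Y : Type) (R : X -> Y -> Prop)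
          (u : nat -> tree ar X) (v : nat -> tree ar Y)
          (su : tree ar X) (sv : tree ar Y),
     ascending u -> ascending v -> is_sup u su -> is_sup v sv ->
     (forall n, Orel sem R (u n) (v n)) -> Orel sem R su sv).
Proof.
  split.
  - intros X R HR t r Htr A o.
    apply (modal_tle (proj1 (Hopen o))); [| exact Htr].
    intros x Ax; exists x; auto.
  - intros X Y R u v su sv Hu _ Hsu Hsv Huv A o HA.
    destruct (modal_sup (Hopen o) Hu Hsu HA) as [n Hn].
    apply (modal_tle (proj1 (Hopen o)) (fun y By => By) (proj1 Hsv n)).
    exact (Huv n A o Hn).
Qed.
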